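(* There exists a finite constant $C=C(d)$ such that for any integer $\ell\ge2$ there exists a flow $\psi^\ell$ connecting $p_\ell$ to $p_{\ell-1}$, with support contained in $\Lambda_\ell$, such that $|\psi^\ell(x;b)|\le C\ell^{-d}$ for every $x\in\Lambda_\ell$ and every $b\in\mathcal B$.
   Context: $\mathcal B=\{e_1,\dots,e_d\}$ is the canonical basis of $\mathbb Z^d$; $\Lambda_\ell=\{0,1,\dots,\ell-1\}^d\subseteq\mathbb Z^d$; $p_\ell$ is the uniform probability measure on $\Lambda_\ell$. A flow is a function $\phi:\mathbb Z^d\times\mathcal B\to\mathbb R$; its support is contained in $\Lambda$ if $\phi(x;b)\ne0$ implies $\{x,x+b\}\subseteq\Lambda$. A flow $\phi$ connects $p$ to $q$ if $p(z)-q(z)=\sum_{b\in\mathcal B}(\phi(z;b)-\phi(z-b;b))$ for all $z\in\mathbb Z^d$. *)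

From mathcomp Require Import all_boot all_order all_algebra.
From mathcomp Require Import reals.
Set Implicit Arguments. Unset Strict Implicit. Unset Printing Implicit Defensive.
Import Order.TTheory GRing.Theory Num.Theory.
Local Open Scope ring_scope.

(* A point of Z^d is a function 'I_d -> int; a direction b in the canonical
   basis B = {e_1,...,e_d} is indexed by b : 'I_d. *)
Definition pt (d : nat) := 'I_d -> int.

Definition shift_pos (d : nat) (x : pt d) (b : 'I_d) : pt d :=
  fun i => x i + (i == b)%:R.
Definition shift_neg (d : nat) (x : pt d) (b : 'I_d) : pt d :=
  fun i => x i - (i == b)%:R.

Definition in_box (d l : nat) (x : pt d) : bool :=
  [forall i, (0 <= x i) && (x i < l%:Z)].

Definition unif (R : realType) (d l : nat) (z : pt d) : R :=
  if in_box l z then (l%:R ^+ d)^-1 else 0.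

Definition flow (R : realType) (d : nat) := pt d -> 'I_d -> R.

Definition flow_supported_in (R : realType) (d l : nat) (phi : flow R d) : Prop :=
  forall x b, phi x b != 0 -> in_box l x && in_box l (shift_pos x b).

Definition connects (R : realType) (d : nat) (phi : flow R d) (p q : pt d -> R) : Prop :=
  forall z, p z - q z = \sum_(b < d) (phi z b - phi (shift_neg z b) b).

From mathcomp Require Import all_boot all_order all_algebra.
From mathcomp Require Import reals zify ring lra.
Import Order.TTheory GRing.Theory Num.Theory.
Local Open Scope ring_scope.

(* In dimension one, p_l - p_m is the discrete derivative of F_l - F_m, where
   F_m is the distribution function of the uniform measure on {0,...,m-1}, so
   F_l - F_m is a flow from p_l to p_m.  In dimension d, interpolate through
   the product measures q_k whose first k marginals are uniform on
   {0,...,m-1} and the others uniform on {0,...,l-1}: q_k and q_(k+1) differ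
   only in coordinate k, so the one-dimensional flow in direction e_k,
   multiplied by the other marginals, connects q_k to q_(k+1), and the sum of
   these flows telescopes from q_0 = p_l to q_d = p_m.  For m = l - 1 every
   marginal and |F_l - F_(l-1)| are at most 1/(l-1) <= 2/l. *)

Section OneDimensional.
Variable R : realType.

Definition unif1 (m : nat) (t : int) : R :=
  if (0 <= t) && (t < m%:Z) then m%:R^-1 else 0.

Definition cdf1 (m : nat) (t : int) : R :=
  if t < 0 then 0 else if t < m%:Z then (t + 1)%:~R / m%:R else 1.

Lemma unif1_eq0 m t : ~~ ((0 <= t) && (t < m%:Z)) -> unif1 m t = 0.
Proof. by rewrite /unif1 => /negbTE ->. Qed.

Lemma norm_unif1_le m k t : (0 < m)%N -> (m <= k)%N -> `|unif1 k t| <= m%:R^-1.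
Proof.
move=> m_gt0 le_mk; rewrite /unif1; case: ifP => _; last first.
  by rewrite normr0 invr_ge0 ler0n.
rewrite ger0_norm ?invr_ge0 ?ler0n // lef_pV2 ?posrE ?ler_nat ?ltr0n //.
exact: leq_trans le_mk.
Qed.

Lemma cdf1_increment m t : (0 < m)%N -> cdf1 m t - cdf1 m (t - 1) = unif1 m t.
Proof.
move=> m_gt0; have m_neq0 : m%:R != 0 :> R by rewrite pnatr_eq0 -lt0n.
rewrite /cdf1 /unif1.
have [t_lt0|[->|[[t_gt0 t_ltm]|[->|t_gtm]]]] :
  t < 0 \/ t = 0 \/ (0 < t /\ t < m%:Z) \/ t = m%:Z \/ m%:Z < t by lia.
- have -> : (t - 1 < 0) = true by lia.
  have -> : (0 <= t) = false by lia.
  by rewrite t_lt0 subr0.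
- have -> : (0 < m%:Z) = true by lia.
  by rewrite subr0 mul1r.
- have -> : (t < 0) = false by lia.
  have -> : (t - 1 < 0) = false by lia.
  have -> : (t - 1 < m%:Z) = true by lia.
  have -> : (0 <= t) = true by lia.
  by rewrite t_ltm subrK intrD -mulrBl addrAC subrr add0r mul1r.
- have -> : (m%:Z < 0) = false by lia.
  have -> : (m%:Z - 1 < 0) = false by lia.
  have -> : (m%:Z - 1 < m%:Z) = true by lia.
  by rewrite ltxx andbF subrK divff // subrr.
- have -> : (t < 0) = false by lia.
  have -> : (t - 1 < 0) = false by lia.
  have -> : (t - 1 < m%:Z) = false by lia.
  have -> : (t < m%:Z) = false by lia.
  by rewrite andbF subrr.
Qed.

Lemma cdf1S_sub_eq0 m t :
  ~~ ((0 <= t) && (t < m%:Z)) -> cdf1 m.+1 t - cdf1 m t = 0.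
Proof.
rewrite /cdf1 => t_out.
have [t_lt0|t_gem] : t < 0 \/ m%:Z <= t by lia.
  by rewrite t_lt0 subrr.
have -> : (t < 0) = false by lia.
have -> : (t < m%:Z) = false by lia.
have [->|t_gtm] : t = m%:Z \/ m%:Z < t by lia.
  have -> : (m%:Z < m.+1%:Z) = true by lia.
  have -> : (m%:Z + 1)%:~R = m.+1%:R :> R by rewrite intrD mulrSr.
  by rewrite divff ?pnatr_eq0 // subrr.
have -> : (t < m.+1%:Z) = false by lia.
by rewrite subrr.
Qed.

Lemma norm_cdf1S_sub_le m t : (0 < m)%N -> `|cdf1 m.+1 t - cdf1 m t| <= m%:R^-1.
Proof.
move=> m_gt0; have m_pos : 0 < m%:R :> R by rewrite ltr0n.
have [/andP[t_ge0 t_ltm]|t_out] := boolP ((0 <= t) && (t < m%:Z)); last first.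
  by rewrite cdf1S_sub_eq0 // normr0 invr_ge0 ler0n.
rewrite /cdf1.
have -> : (t < 0) = false by lia.
have -> : (t < m.+1%:Z) = true by lia.
rewrite t_ltm mulrSr.
have T_ge0 : 0 <= (t + 1)%:~R :> R by rewrite ler0z; lia.
have T_lem : (t + 1)%:~R <= m%:R :> R by rewrite -[m%:R]/(m%:Z%:~R) ler_int; lia.
set T := (t + 1)%:~R; set M := m%:R.
have -> : T / (M + 1) - T / M = - (T / (M * (M + 1))).
  by field; apply/andP; split; lra.
rewrite normrN ger0_norm; last by apply: divr_ge0 => //; apply: mulr_ge0; lra.
rewrite ler_pdivrMr; last by apply: mulr_gt0; lra.
by rewrite mulrA mulVf; lra.
Qed.

End OneDimensional.

Lemma prod_unif1 (R : realType) d m (z : pt d) :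
  \prod_(i < d) unif1 R m (z i) = unif R m z.
Proof.
rewrite /unif /in_box; case: (boolP [forall i, _]) => [/forallP z_in|].
  rewrite (eq_bigr (fun => m%:R^-1)) => [|i _]; last by rewrite /unif1 z_in.
  by rewrite prodr_const card_ord exprVn.
rewrite negb_forall => /existsP[i z_out].
by rewrite (bigD1 i) //= unif1_eq0 // mul0r.
Qed.

Section Interpolation.
Variables (R : realType) (d l m : nat).

Definition interp_marginal (k i : nat) : int -> R :=
  if (i < k)%N then unif1 R m else unif1 R l.

Definition interp (k : nat) (z : pt d) : R :=
  \prod_(i < d) interp_marginal k i (z i).

Definition interp_flow : flow R d := fun z b =>
  (\prod_(i < d | i != b) interp_marginal b i (z i)) *
  (cdf1 R l (z b) - cdf1 R m (z b)).

Lemma interp0 z : interp 0 z = unif R l z.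
Proof. by rewrite -prod_unif1. Qed.

Lemma interp_dim z : interp d z = unif R m z.
Proof.
by rewrite -prod_unif1; apply: eq_bigr => i _; rewrite /interp_marginal ltn_ord.
Qed.

Hypotheses (l_gt0 : (0 < l)%N) (m_gt0 : (0 < m)%N).

Lemma interp_flow_div z (b : 'I_d) :
  interp_flow z b - interp_flow (shift_neg z b) b = interp b z - interp b.+1 z.
Proof.
have other_marginals : forall k : nat, (k == b) || (k == b.+1) ->
    \prod_(i < d | i != b) interp_marginal k i (z i) =
    \prod_(i < d | i != b) interp_marginal b i (shift_neg z b i).
  move=> k k_b; apply: eq_bigr => i i_neq_b.
  rewrite /shift_neg (negbTE i_neq_b) subr0 /interp_marginal.
  have i_neq_b_nat : (i == b :> nat) = false by apply/negbTE.
  by case/orP: k_b => /eqP ->; rewrite // ltnS leq_eqVlt i_neq_b_nat.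
have interp_split k : interp k z =
    interp_marginal k b (z b) * \prod_(i < d | i != b) interp_marginal k i (z i).
  by rewrite /interp (bigD1 b).
rewrite /interp_flow !interp_split !other_marginals ?eqxx ?orbT //.
have -> : shift_neg z b b = z b - 1 by rewrite /shift_neg eqxx.
rewrite /interp_marginal ltnn ltnSn.
rewrite -(cdf1_increment _ _ _ l_gt0) -(cdf1_increment _ _ _ m_gt0); ring.
Qed.

Lemma interp_flow_connects : connects interp_flow (unif R l) (unif R m).
Proof.
move=> z; rewrite -interp0 -interp_dim.
rewrite (eq_bigr (fun b : 'I_d => interp b z - interp b.+1 z)) => [|b _];
  last exact: interp_flow_div.
rewrite -(big_mkord xpredT (fun b => interp b z - interp b.+1 z)).
rewrite (telescope_sumr_eq (fun k => - interp k z)) => [|//|k _];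
  by rewrite opprK addrC.
Qed.

End Interpolation.

Section AdjacentBoxes.
Variables (R : realType) (d m : nat).

Let psi := interp_flow R d m.+1 m.

Lemma interp_flowS_supported : flow_supported_in m.+1 psi.
Proof.
move=> z b; rewrite /psi /interp_flow mulf_eq0 negb_or => /andP[P_neq0 F_neq0].
have zb_in : (0 <= z b) && (z b < m%:Z).
  by apply: contraR F_neq0 => zb_out; rewrite cdf1S_sub_eq0.
have zi_in i : i != b -> (0 <= z i) && (z i < m.+1%:Z).
  move=> i_neq_b; apply: contraR P_neq0 => zi_out.
  rewrite (bigD1 i) //= /interp_marginal.
  by case: ifP => _; rewrite unif1_eq0 ?mul0r //; apply: contra zi_out; lia.
apply/andP; split; apply/forallP => i; have [->|i_neq_b] := eqVneq i b.
- by move: zb_in; lia.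
- exact: zi_in.
- by rewrite /shift_pos eqxx; move: zb_in; lia.
- by rewrite /shift_pos (negbTE i_neq_b) addr0; apply: zi_in.
Qed.

Lemma norm_interp_flowS_le z b : (0 < m)%N -> `|psi z b| <= m%:R^-1 ^+ d.
Proof.
move=> m_gt0; rewrite /psi /interp_flow normrM normr_prod.
rewrite -[X in _ ^+ X]card_ord -prodr_const [X in _ <= X](bigD1 b) //= mulrC.
apply: ler_pM; rewrite ?prodr_ge0 ?norm_cdf1S_sub_le //.
apply: ler_prod => i _; rewrite normr_ge0 /interp_marginal.
by case: ifP => _; apply: norm_unif1_le.
Qed.

End AdjacentBoxes.

Lemma invn_le_2_div (R : realType) m : (0 < m)%N -> m%:R^-1 <= 2 / m.+1%:R :> R.
Proof.
move=> m_gt0; rewrite ler_pdivlMr ?ltr0n // mulrC ler_pdivrMr ?ltr0n //.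
by rewrite -natrM ler_nat; lia.
Qed.

Theorem lemmaG1 (R : realType) (d : nat) :
  exists C : R, forall l : nat, (2 <= l)%N ->
    exists psi : flow R d,
      connects psi (@unif R d l) (@unif R d l.-1) /\
      flow_supported_in l psi /\
      (forall x (b : 'I_d), in_box l x -> `|psi x b| <= C * (l%:R ^+ d)^-1).
Proof.
exists (2 ^+ d); case=> [|[|m]] // _.
exists (interp_flow R d m.+2 m.+1); split; first exact: interp_flow_connects.
split; first exact: interp_flowS_supported.
move=> x b _; apply: le_trans (norm_interp_flowS_le _ _ m.+1 x b _) _ => //.
rewrite -exprVn -exprMn; apply: lerXn2r; rewrite ?nnegrE ?invr_ge0 ?ler0n //.
  by rewrite mulr_ge0 ?invr_ge0 ?ler0n.
exact: invn_le_2_div.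
Qed.
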